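(* Let $F,G\colon\mathbb A^{op}\times\mathbb A\to\mathbb B$ and $H,K\colon\mathbb B^{op}\times\mathbb B\to\mathbb C$ be functors and $\phi\colon F\to G$, $\psi\colon H\to K$ dinatural transformations of type $2\to1\leftarrow2$. Then the horizontal composite $\phi\ast\psi$ is a dinatural transformation $H(G^{op},F)\to K(F^{op},G)$ of type $4\to1\leftarrow4$, where $H(G^{op},F),K(F^{op},G)\colon\mathbb A^{[+,-,-,+]}\to\mathbb C$ are given on objects by $(A,B,C,D)\mapsto H(G(A,B),F(C,D))$ and $(A,B,C,D)\mapsto K(F(A,B),G(C,D))$ and similarly on morphisms.
   Context: A dinatural transformation $\phi\colon F\to G$ of type $2\to1\leftarrow2$ between functors $F,G\colon\mathbb A^{op}\times\mathbb A\to\mathbb B$ is a family $\phi_A\colon F(A,A)\to G(A,A)$ such that for every $f\colon A\to A'$, $G(1_A,f)\circ\phi_A\circ F(f,1_A)=G(f,1_{A'})\circ\phi_{A'}\circ F(1_{A'},f)$. A transformation of type $4\to1\leftarrow4$ between functors $\mathbb A^{[+,-,-,+]}=\mathbb A\times\mathbb A^{op}\times\mathbb A^{op}\times\mathbb A\to\mathbb C$ is a family indexed by one object $A$ with components between the functors evaluated at $(A,A,A,A)$; it is dinatural if for every $f\colon A\to A'$ the hexagon obtained by applying the domain functor to $f$ in its covariant arguments ($1,4$) or contravariant arguments ($2,3$) and the codomain functor dually commutes, exactly as in the two-argument case. Horizontal composite: $\phi\ast\psi$ is the family with components $(\phi\ast\psi)_A\colon H(G(A,A),F(A,A))\to K(F(A,A),G(A,A))$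 given by $(\phi\ast\psi)_A=K(1_{F(A,A)},\phi_A)\circ\psi_{F(A,A)}\circ H(\phi_A,1_{F(A,A)})$, which equals $K(\phi_A,1_{G(A,A)})\circ\psi_{G(A,A)}\circ H(1_{G(A,A)},\phi_A)$ by dinaturality of $\psi$. *)

Set Implicit Arguments.

Record Category := {
  ob :> Type;
  hom : ob -> ob -> Type;
  comp : forall a b c : ob, hom b c -> hom a b -> hom a c;
  idm : forall a : ob, hom a a;
  comp_id_l : forall (a b : ob) (f : hom a b), comp (idm b) f = f;
  comp_id_r : forall (a b : ob) (f : hom a b), comp f (idm a) = f;
  comp_assoc : forall (a b c d : ob) (h : hom c d) (g : hom b c) (f : hom a b),
      comp h (comp g f) = comp (comp h g) f
}.
Arguments hom {C} a b : rename.
Arguments comp {C a b c} g f : rename.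
Arguments idm {C} a : rename.

(* A functor  A^op x A -> B, written out: contravariant in the first argument,
   covariant in the second. *)
Record MixedFunctor (A B : Category) := {
  fob : A -> A -> B;
  fmap : forall (a a' b b' : A), hom a' a -> hom b b' -> hom (fob a b) (fob a' b');
  fmap_id : forall a b : A, fmap a a b b (idm a) (idm b) = idm (fob a b);
  fmap_comp : forall (a1 a2 a3 b1 b2 b3 : A) (f : hom a2 a1) (f' : hom a3 a2)
      (g : hom b1 b2) (g' : hom b2 b3),
      fmap a1 a3 b1 b3 (comp f f') (comp g' g)
      = comp (fmap a2 a3 b2 b3 f' g') (fmap a1 a2 b1 b2 f g)
}.
Arguments fob {A B} m a b.
Arguments fmap {A B} m {a a' b b'} f g.

Definition dinatural2 {A B : Category} (F G : MixedFunctor A B)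
  (phi : forall a : A, hom (fob F a a) (fob G a a)) : Prop :=
  forall (a a' : A) (f : hom a a'),
    comp (fmap G (idm a) f) (comp (phi a) (fmap F f (idm a)))
    = comp (fmap G f (idm a')) (comp (phi a') (fmap F (idm a') f)).

(* Dinaturality of type 4 -> 1 <- 4 for transformations between (object and
   morphism parts of) functors A^[+,-,-,+] = A x A^op x A^op x A -> C.
   A morphism (a1,b1,c1,d1) -> (a2,b2,c2,d2) of A^[+,-,-,+] is a quadruple
   a1 -> a2, b2 -> b1, c2 -> c1, d1 -> d2. *)
Definition dinatural4 {A C : Category}
  (D0 : A -> A -> A -> A -> C)
  (D1 : forall a1 b1 c1 d1 a2 b2 c2 d2 : A,
        hom a1 a2 -> hom b2 b1 -> hom c2 c1 -> hom d1 d2 ->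
        hom (D0 a1 b1 c1 d1) (D0 a2 b2 c2 d2))
  (E0 : A -> A -> A -> A -> C)
  (E1 : forall a1 b1 c1 d1 a2 b2 c2 d2 : A,
        hom a1 a2 -> hom b2 b1 -> hom c2 c1 -> hom d1 d2 ->
        hom (E0 a1 b1 c1 d1) (E0 a2 b2 c2 d2))
  (theta : forall a : A, hom (D0 a a a a) (E0 a a a a)) : Prop :=
  forall (a a' : A) (f : hom a a'),
    comp (E1 _ _ _ _ _ _ _ _ f (idm a) (idm a) f)
         (comp (theta a) (D1 _ _ _ _ _ _ _ _ (idm a) f f (idm a)))
    = comp (E1 _ _ _ _ _ _ _ _ (idm a') f f (idm a'))
         (comp (theta a') (D1 _ _ _ _ _ _ _ _ f (idm a') (idm a') f)).

Section Composites.
Context {A B C : Category} (F G : MixedFunctor A B) (H K : MixedFunctor B C).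

Definition HGF_ob (a b c d : A) : C := fob H (fob G a b) (fob F c d).
Definition HGF_map (a1 b1 c1 d1 a2 b2 c2 d2 : A)
  (fa : hom a1 a2) (fb : hom b2 b1) (fc : hom c2 c1) (fd : hom d1 d2) :
  hom (HGF_ob a1 b1 c1 d1) (HGF_ob a2 b2 c2 d2) :=
  fmap H (fmap G fa fb) (fmap F fc fd).

Definition KFG_ob (a b c d : A) : C := fob K (fob F a b) (fob G c d).
Definition KFG_map (a1 b1 c1 d1 a2 b2 c2 d2 : A)
  (fa : hom a1 a2) (fb : hom b2 b1) (fc : hom c2 c1) (fd : hom d1 d2) :
  hom (KFG_ob a1 b1 c1 d1) (KFG_ob a2 b2 c2 d2) :=
  fmap K (fmap F fa fb) (fmap G fc fd).

Definition hcomp (phi : forall a : A, hom (fob F a a) (fob G a a))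
  (psi : forall b : B, hom (fob H b b) (fob K b b)) (a : A) :
  hom (HGF_ob a a a a) (KFG_ob a a a a) :=
  comp (fmap K (idm (fob F a a)) (phi a))
       (comp (psi (fob F a a)) (fmap H (phi a) (idm (fob F a a)))).
End Composites.


(* Fix a dinatural psi : H -> K with H, K : B^op x B -> C.  Every morphism
   u : x -> z of B induces a "wedge" component
       psi^u := K(1,u) o psi_x o H(u,1) : H(z,x) -> K(x,z),
   and the horizontal composite is (phi * psi)_a = psi^(phi_a).
   The whole proof rests on one transport law for these wedges:
       K(g,w) o psi^v o H(w,g) = psi^(w o v o g)          (wedge_transport)
   for g : x' -> x, v : x -> z, w : z -> z'.  Postcomposition with w is
   pure functoriality (wedge_post); precomposition with g is exactly the
   dinaturality of psi (wedge_pre).  Applied with g = F(f,1), v = phi_a,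
   w = G(1,f) and with g = F(1,f), v = phi_a', w = G(f,1), it turns both
   sides of the 4 -> 1 <- 4 hexagon into single wedges, whose indices
   G(1,f) o phi_a o F(f,1) and G(f,1) o phi_a' o F(1,f) agree by the
   dinaturality of phi. *)

Section MixedFunctorFacts.
Context {A B : Category} (m : MixedFunctor A B).

Lemma comp_fmap (a1 a2 a3 b1 b2 b3 : A) (f : hom a2 a1) (f' : hom a3 a2)
  (g : hom b1 b2) (g' : hom b2 b3) :
  comp (fmap m f' g') (fmap m f g) = fmap m (comp f f') (comp g' g).
Proof. now rewrite fmap_comp. Qed.

Lemma fmap_interchange (a a' b b' : A) (f : hom a' a) (g : hom b b') :
  comp (fmap m f (idm b')) (fmap m (idm a) g)
  = comp (fmap m (idm a') g) (fmap m f (idm b)).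
Proof. now rewrite !comp_fmap, !comp_id_l, !comp_id_r. Qed.

End MixedFunctorFacts.

Section Wedges.
Context {B C : Category} (H K : MixedFunctor B C)
  (psi : forall b : B, hom (fob H b b) (fob K b b)).

Definition wedge {x z : B} (u : hom x z) : hom (fob H z x) (fob K x z) :=
  comp (fmap K (idm x) u) (comp (psi x) (fmap H u (idm x))).

Lemma wedge_post (x z z' : B) (v : hom x z) (w : hom z z') :
  comp (fmap K (idm x) w) (comp (wedge v) (fmap H w (idm x)))
  = wedge (comp w v).
Proof.
  unfold wedge.
  rewrite !comp_assoc, comp_fmap, <- !comp_assoc, comp_fmap, !comp_id_l.
  reflexivity.
Qed.

Hypothesis psi_dinat : dinatural2 H K psi.

Lemma wedge_dinat (x' x : B) (g : hom x' x) :
  wedge g = comp (fmap K g (idm x)) (comp (psi x) (fmap H (idm x) g)).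
Proof. unfold wedge. exact (psi_dinat _ _ g). Qed.

Lemma wedge_pre (x' x z : B) (g : hom x' x) (v : hom x z) :
  comp (fmap K g (idm z)) (comp (wedge v) (fmap H (idm z) g))
  = wedge (comp v g).
Proof.
  rewrite <- wedge_post, (wedge_dinat _ _ g).
  unfold wedge at 1.
  rewrite !comp_assoc, (fmap_interchange K), <- !comp_assoc, (fmap_interchange H).
  reflexivity.
Qed.

Lemma wedge_transport (x' x z z' : B) (g : hom x' x) (v : hom x z) (w : hom z z') :
  comp (fmap K g w) (comp (wedge v) (fmap H w g)) = wedge (comp w (comp v g)).
Proof.
  rewrite (comp_assoc _ _ _ _ _ w v g), <- wedge_pre, <- wedge_post.
  rewrite !comp_assoc, (comp_fmap K), <- !comp_assoc, (comp_fmap H).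
  now rewrite !comp_id_l.
Qed.

End Wedges.

Lemma hcomp_as_wedge {A B C : Category} (F G : MixedFunctor A B) (H K : MixedFunctor B C)
  (phi : forall a : A, hom (fob F a a) (fob G a a))
  (psi : forall b : B, hom (fob H b b) (fob K b b)) (a : A) :
  hcomp F G H K phi psi a = wedge H K psi (phi a).
Proof. reflexivity. Qed.

Theorem mainTheorem8 (A B C : Category) (F G : MixedFunctor A B) (H K : MixedFunctor B C)
  (phi : forall a : A, hom (fob F a a) (fob G a a))
  (psi : forall b : B, hom (fob H b b) (fob K b b)) :
  dinatural2 F G phi -> dinatural2 H K psi ->
  dinatural4 (HGF_ob F G H) (HGF_map F G H) (KFG_ob F G K) (KFG_map F G K)
    (hcomp F G H K phi psi).
Proof.
  intros phi_dinat psi_dinat a a' f.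
  unfold HGF_map, KFG_map, HGF_ob, KFG_ob.
  rewrite !hcomp_as_wedge, !(wedge_transport H K psi psi_dinat).
  f_equal.
  exact (phi_dinat a a' f).
Qed.
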